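(* Consider the Diophantine equation $n^2-(12s-5)n+12s^2=0$ in positive integers $(n,s)$. The maps $\iota_1(n,s)=(n,n-s)$ and $\iota_2(n,s)=(12s-5-n,s)$ send positive integer solutions to positive integer solutions, and the set of all positive integer solutions is exactly the set of pairs obtained from $(3,1)$ by finitely many applications of $\iota_1$ and $\iota_2$. Explicitly, these are the pairs of the two-sided chain $\dots,(1444,1311),(1444,133),(147,133),(147,14),(16,14),(16,2),(3,2),(3,1),(4,1),(4,3),(27,3),(27,24),(256,24),(256,232),(2523,232),\dots$ in which consecutive pairs are related alternately by $\iota_1$ and $\iota_2$. *)

From Stdlib Require Import ZArith Lia.
Open Scope Z_scope.

Definition is_pos_sol (p : Z * Z) : Prop :=
  let (n, s) := p in
  0 < n /\ 0 < s /\ n ^ 2 - (12 * s - 5) * n + 12 * s ^ 2 = 0.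

Definition iota1 (p : Z * Z) : Z * Z := let (n, s) := p in (n, n - s).
Definition iota2 (p : Z * Z) : Z * Z := let (n, s) := p in (12 * s - 5 - n, s).

Inductive reachable : Z * Z -> Prop :=
| reach_base : reachable (3, 1)
| reach_iota1 : forall p, reachable p -> reachable (iota1 p)
| reach_iota2 : forall p, reachable p -> reachable (iota2 p).

(** The equation is quadratic in each variable: for fixed [s] its roots in [n]
    are [n] and [12s - 5 - n] (Vieta), and for fixed [n] the substitution
    [s ↦ n - s] preserves it.  Hence [iota1] and [iota2] are involutions of the
    solution set.  For a solution other than [(3, 1)] one of them strictly
    decreases [n + s], so every solution descends to [(3, 1)]. *)

From Stdlib Require Import ZArith Lia Wf_nat.
Open Scope Z_scope.

Lemma iota1_involutive (p : Z * Z) : iota1 (iota1 p) = p.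
Proof. destruct p as [n s]; simpl; f_equal; lia. Qed.

Lemma iota2_involutive (p : Z * Z) : iota2 (iota2 p) = p.
Proof. destruct p as [n s]; simpl; f_equal; lia. Qed.

Lemma pos_sol_lt (n s : Z) : is_pos_sol (n, s) -> s < n.
Proof.
  intros [Hn [Hs E]].
  assert (Hsum : n * n + 5 * n + 12 * (s * s) = 12 * (s * n)) by lia.
  destruct (Z_lt_le_dec s n) as [Hlt | Hle]; [exact Hlt |].
  assert (s * n <= s * s) by nia.
  nia.
Qed.

Lemma pos_sol_iota1 (p : Z * Z) : is_pos_sol p -> is_pos_sol (iota1 p).
Proof.
  destruct p as [n s]; intros Hp.
  pose proof (pos_sol_lt n s Hp) as Hlt.
  destruct Hp as [Hn [Hs E]]; unfold iota1, is_pos_sol.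
  repeat split; [lia | lia |].
  rewrite <- E; ring.
Qed.

Lemma pos_sol_iota2 (p : Z * Z) : is_pos_sol p -> is_pos_sol (iota2 p).
Proof.
  destruct p as [n s]; intros [Hn [Hs E]]; unfold iota2, is_pos_sol.
  assert (Hvieta : n * (12 * s - 5 - n) = 12 * s ^ 2) by lia.
  repeat split; nia.
Qed.

Lemma reachable_pos_sol (p : Z * Z) : reachable p -> is_pos_sol p.
Proof.
  induction 1.
  - simpl; lia.
  - exact (pos_sol_iota1 p IHreachable).
  - exact (pos_sol_iota2 p IHreachable).
Qed.

(** A solution that neither [iota1] nor [iota2] can shrink is [(3, 1)]. *)
Lemma pos_sol_minimal (n s : Z) :
  is_pos_sol (n, s) -> 2 * s <= n -> 2 * n <= 12 * s - 5 -> (n, s) = (3, 1).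
Proof.
  intros [Hn [Hs E]] H1 H2.
  (* Under [H1] and [H2] the two factors have opposite signs, so [2s(4s - 5) <= 0]. *)
  assert (Hfact : (n - 2 * s) * (n - 10 * s + 5) = 2 * s * (4 * s - 5)) by lia.
  assert (Hs1 : s = 1).
  { assert ((n - 2 * s) * (n - 10 * s + 5) <= 0) by nia. nia. }
  subst s.
  assert (Hn3 : n = 3) by nia.
  now subst n.
Qed.

Lemma pos_sol_reachable (p : Z * Z) : is_pos_sol p -> reachable p.
Proof.
  destruct p as [n s].
  remember (Z.to_nat (n + s)) as m eqn:Hm.
  revert n s Hm; induction m as [m IH] using lt_wf_ind; intros n s Hm Hp.
  pose proof Hp as [Hn [Hs E]].
  destruct (Z_lt_le_dec n (2 * s)) as [Hsmall_n | H1].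
  - rewrite <- (iota1_involutive (n, s)); apply reach_iota1.
    apply (IH (Z.to_nat (n + (n - s)))); [lia | reflexivity |].
    exact (pos_sol_iota1 (n, s) Hp).
  - destruct (Z_lt_le_dec (12 * s - 5) (2 * n)) as [Hlarge_n | H2].
    + rewrite <- (iota2_involutive (n, s)); apply reach_iota2.
      apply (IH (Z.to_nat (12 * s - 5 - n + s))); [| reflexivity |].
      * pose proof (pos_sol_iota2 (n, s) Hp) as [Hpos _]; lia.
      * exact (pos_sol_iota2 (n, s) Hp).
    + rewrite (pos_sol_minimal n s Hp H1 H2); exact reach_base.
Qed.

Theorem mainTheorem11 :
  (forall p : Z * Z, is_pos_sol p -> is_pos_sol (iota1 p)) /\
  (forall p : Z * Z, is_pos_sol p -> is_pos_sol (iota2 p)) /\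
  (forall p : Z * Z, is_pos_sol p <-> reachable p).
Proof.
  split; [exact pos_sol_iota1 |].
  split; [exact pos_sol_iota2 |].
  split; [exact (pos_sol_reachable p) | exact (reachable_pos_sol p)].
Qed.
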